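(* Let $f:I\to[n]$ and $f':I'\to[n]$ be left active morphisms in $\Delta$ such that the claw $(f,f')$ is compatible, and consider their pullback square in $\Delta$ (with corners $I\cap I'$, $I$, $I'$, $[n]$), which is strongly biCartesian. Then the image of this square under the canonical functor $\Delta\to\Lambda$ is a pushout square in $\Lambda$.
   Context: $\Delta$: simplex category of $[n]=\{0<\dots<n\}$, weakly monotone maps; $f$ left active means $f(0)=0$. $\Lambda$: Connes' cyclic category with canonical functor $\Delta\to\Lambda$, $[n]\mapsto\langle n\rangle=(\mathbb{Z}/(n+1),+1)$, identifying $\Delta$ with the slice $\Lambda_{/\langle0\rangle}$ (forgetful functor). A pair $(f:I\to[n],f':I'\to[n])$ is compatible if (BC1) for each $i\in[n]$ at most one of $f^{-1}\{i\},f'^{-1}\{i\}$ is not a singleton, and (BC2) for each $0<i\le n$ at most one of $f(I),f'(I')$ fails to contain $\{i-1,i\}$. *)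

From mathcomp Require Import all_boot all_order all_algebra.
Set Implicit Arguments. Unset Strict Implicit. Unset Printing Implicit Defensive.
Import Order.TTheory GRing.Theory Num.Theory.

(** * The simplex category Delta.
    Objects are [n] = {0 < ... < n}, represented by 'I_n.+1;
    a morphism [m] -> [n] is a weakly monotone function 'I_m.+1 -> 'I_n.+1. *)
Definition dmono (m n : nat) (f : 'I_m.+1 -> 'I_n.+1) : Prop :=
  forall x y : 'I_m.+1, (x <= y)%N -> (f x <= f y)%N.

Definition left_active (m n : nat) (f : 'I_m.+1 -> 'I_n.+1) : Prop :=
  nat_of_ord (f ord0) = 0%N.

Definition in_image (m n : nat) (f : 'I_m.+1 -> 'I_n.+1) (j : nat) : bool :=
  [exists x, nat_of_ord (f x) == j].

(** Compatibility of the claw (f, f') : conditions (BC1) and (BC2).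
    "at most one of the two fails" = "at least one of the two holds". *)
Definition compatible (m m' n : nat) (f : 'I_m.+1 -> 'I_n.+1)
    (f' : 'I_m'.+1 -> 'I_n.+1) : Prop :=
  (forall i : 'I_n.+1,
      (#|[pred x | f x == i]| == 1%N) || (#|[pred x | f' x == i]| == 1%N)) /\
  (forall i : 'I_n.+1, (0 < i)%N ->
      (in_image f i.-1 && in_image f i) || (in_image f' i.-1 && in_image f' i)).

Definition delta_pullback (k m m' n : nat)
    (g : 'I_k.+1 -> 'I_m.+1) (g' : 'I_k.+1 -> 'I_m'.+1)
    (f : 'I_m.+1 -> 'I_n.+1) (f' : 'I_m'.+1 -> 'I_n.+1) : Prop :=
  [/\ dmono g, dmono g', (forall x, f (g x) = f' (g' x)) &
   forall (l : nat) (h : 'I_l.+1 -> 'I_m.+1) (h' : 'I_l.+1 -> 'I_m'.+1),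
     dmono h -> dmono h' -> (forall x, f (h x) = f' (h' x)) ->
     exists u : 'I_l.+1 -> 'I_k.+1,
       [/\ dmono u, (forall x, g (u x) = h x), (forall x, g' (u x) = h' x) &
        forall u' : 'I_l.+1 -> 'I_k.+1, dmono u' ->
          (forall x, g (u' x) = h x) -> (forall x, g' (u' x) = h' x) ->
          forall x, u' x = u x]].

(** Model: Lambda = Lambda_infty / Z.  A morphism
    <m> -> <n> is represented by a weakly monotone F : int -> int with
    F (i + (m+1)) = F i + (n+1); two representatives define the same morphism
    iff they differ by a multiple of (n+1).  Composition is composition of
    representatives, identity is the identity. *)
Local Open Scope ring_scope.

Definition lam_hom (m n : nat) (F : int -> int) : Prop :=
  (forall i j : int, i <= j -> F i <= F j) /\
  (forall i : int, F (i + (m.+1)%:Z) = F i + (n.+1)%:Z).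

Definition lam_eq (n : nat) (F G : int -> int) : Prop :=
  exists c : int, forall i : int, G i = F i + c * (n.+1)%:Z.

(** The canonical functor Delta -> Lambda, [m] |-> <m>:
    f is extended periodically, i + q(m+1) |-> f(i) + q(n+1) for i in [m]. *)
Definition lam_of (m n : nat) (f : 'I_m.+1 -> 'I_n.+1) : int -> int :=
  fun i => (nat_of_ord (f (inord (absz (i %% (m.+1)%:Z)%Z))))%:Z
           + (i %/ (m.+1)%:Z)%Z * (n.+1)%:Z.

Definition lam_pushout (a b c d : nat) (p q u v : int -> int) : Prop :=
  [/\ (lam_hom a b p /\ lam_hom a c q), lam_hom b d u, lam_hom c d v,
   lam_eq d (u \o p) (v \o q) &
   forall (e : nat) (x y : int -> int),
     lam_hom b e x -> lam_hom c e y -> lam_eq e (x \o p) (y \o q) ->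
     exists z : int -> int,
       [/\ lam_hom d e z, lam_eq e (z \o u) x, lam_eq e (z \o v) y &
        forall z' : int -> int, lam_hom d e z' ->
          lam_eq e (z' \o u) x -> lam_eq e (z' \o v) y -> lam_eq e z z']].

(* A morphism <m> -> <n> of Lambda is a monotone map Z -> Z commuting with the shifts
   by m+1 and n+1, so it is the periodic extension of its monotone restriction h to
   {0..m}, subject only to h m <= h 0 + n + 1; the functor Delta -> Lambda extends f
   in exactly this way.  Given x, y under the images of g and g', their restrictions
   agree on every pair (i, i') with f i = f' i', since such a pair lifts to the pullback.
   By (BC1) x is then constant on the fibres of f and y on those of f', so they glue to
   a function on [n]: it is defined everywhere because f 0 = 0 and (BC2) puts every
   i > 0 in the image of f or f', and it is monotone because (BC2) puts i-1 and i in a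
   common image.  Its periodic extension is the factorization, unique because the
   images of f and f' cover [n]. *)

From mathcomp Require Import all_boot all_order all_algebra.
From mathcomp Require Import ring.
Set Implicit Arguments. Unset Strict Implicit. Unset Printing Implicit Defensive.
Import Order.TTheory GRing.Theory Num.Theory.
Local Open Scope ring_scope.

Lemma int_ord_decomp (m : nat) (i : int) :
  exists (r : 'I_m.+1) (q : int), i = r%:Z + q * (m.+1)%:Z.
Proof.
have m_neq0 : (m.+1)%:Z != 0 by [].
case: (i %% (m.+1)%:Z)%Z (divz_eq i (m.+1)%:Z) (modz_ge0 i m_neq0) (ltz_mod i m_neq0) => //.
move=> r i_eq _ r_lt.
by exists (Ordinal (r_lt : (r < m.+1)%N)), (i %/ (m.+1)%:Z)%Z; rewrite addrC.
Qed.

Lemma int_homo_step (F : int -> int) :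
  (forall i, F i <= F (i + 1)) -> {homo F : i j / i <= j}.
Proof.
move=> F_step i j; rewrite -subr_ge0; case: (j - i) (subrK i j) => // d <- _.
have F_shift_mono : {homo (fun t : nat => F (i + t%:Z)) : s t / (s <= t)%N >-> s <= t}.
  apply: homo_leq => [//|? ? ?|t]; first exact: le_trans.
  by rewrite -addn1 PoszD addrA F_step.
by have := F_shift_mono 0%N d (leq0n d); rewrite addr0 addrC.
Qed.

Definition periodize (m E : nat) (h : 'I_m.+1 -> int) (i : int) : int :=
  h (inord (absz (i %% (m.+1)%:Z)%Z)) + (i %/ (m.+1)%:Z)%Z * E%:Z.

Lemma lam_of_periodize m n (f : 'I_m.+1 -> 'I_n.+1) :
  lam_of f = periodize n.+1 (fun r => (f r)%:Z).
Proof. by []. Qed.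

Lemma eq_periodize m E (h1 h2 : 'I_m.+1 -> int) :
  h1 =1 h2 -> periodize E h1 =1 periodize E h2.
Proof. by move=> eq_h i; rewrite /periodize eq_h. Qed.

Lemma periodizeE m E (h : 'I_m.+1 -> int) (r : 'I_m.+1) (q : int) :
  periodize E h (r%:Z + q * (m.+1)%:Z) = h r + q * E%:Z.
Proof.
have r_small : 0 <= r%:Z < (m.+1)%:Z by rewrite ltz_nat ltn_ord.
rewrite /periodize [r%:Z + _]addrC modzMDl divzMDl // modz_small // divz_small //.
by rewrite addr0 inord_val.
Qed.

Lemma periodize_ord m E (h : 'I_m.+1 -> int) (r : 'I_m.+1) :
  periodize E h r%:Z = h r.
Proof. by have := periodizeE E h r 0; rewrite !mul0r !addr0. Qed.

Lemma lam_hom_shift m n F : lam_hom m n F ->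
  forall i q, F (i + q * (m.+1)%:Z) = F i + q * (n.+1)%:Z.
Proof.
case=> _ F_period i; elim/int_rec => [|q IHq|q IHq]; first by rewrite !mul0r !addr0.
  have -> : i + (q.+1)%:Z * (m.+1)%:Z = i + q%:Z * (m.+1)%:Z + (m.+1)%:Z.
    by rewrite intS; ring.
  by rewrite F_period IHq intS; ring.
apply/(addIr (n.+1)%:Z); rewrite -F_period.
have -> : i + - (q.+1)%:Z * (m.+1)%:Z + (m.+1)%:Z = i + - q%:Z * (m.+1)%:Z.
  by rewrite intS; ring.
by rewrite IHq intS; ring.
Qed.

Lemma lam_hom_addr m n F (c : int) : lam_hom m n F -> lam_hom m n (fun i => F i + c).
Proof.
case=> F_mono F_period; split=> [i j ij|i]; first by rewrite lerD2r F_mono.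
by rewrite F_period addrAC.
Qed.

Lemma periodize_lam_hom m n (h : 'I_m.+1 -> int) :
  {homo h : a b / (a <= b)%N >-> a <= b} ->
  h ord_max <= h ord0 + (n.+1)%:Z -> lam_hom m n (periodize n.+1 h).
Proof.
move=> h_mono h_wrap; split; last first.
  move=> i; have [r [q ->]] := int_ord_decomp m i.
  by rewrite -addrA -{2}[(m.+1)%:Z]mul1r -mulrDl !periodizeE mulrDl mul1r addrA.
apply: int_homo_step => i; have [r [q ->]] := int_ord_decomp m i.
rewrite periodizeE; have [r_lt|r_max] := ltnP r m.
  have -> : r%:Z + q * (m.+1)%:Z + 1
            = (Ordinal (r_lt : (r.+1 < m.+1)%N))%:Z + q * (m.+1)%:Z.
    by rewrite /= -[r.+1]addn1 PoszD addrAC.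
  by rewrite periodizeE lerD2r h_mono.
have -> : r = ord_max by apply/val_inj/eqP; rewrite eqn_leq r_max -ltnS ltn_ord.
have -> : (@ord_max m)%:Z + q * (m.+1)%:Z + 1 = (@ord0 m)%:Z + (q + 1) * (m.+1)%:Z.
  by rewrite /= intS; ring.
by rewrite periodizeE mulrDl mul1r [q * _ + _]addrC addrA lerD2r.
Qed.

Lemma lam_hom_periodize m n F :
  lam_hom m n F -> F =1 periodize n.+1 (fun r : 'I_m.+1 => F r%:Z).
Proof.
move=> F_hom i; have [r [q ->]] := int_ord_decomp m i.
by rewrite periodizeE (lam_hom_shift F_hom).
Qed.

Lemma lam_hom_mono_ord m n F :
  lam_hom m n F -> {homo (fun r : 'I_m.+1 => F r%:Z) : a b / (a <= b)%N >-> a <= b}.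
Proof. by case=> F_mono _ a b ab; apply: F_mono; rewrite lez_nat. Qed.

Lemma lam_hom_wrap_ord m n F :
  lam_hom m n F -> F (@ord_max m)%:Z <= F (@ord0 m)%:Z + (n.+1)%:Z.
Proof.
case=> F_mono F_period; rewrite -F_period; apply: F_mono.
by rewrite add0r lez_nat leqnSn.
Qed.

Lemma lam_of_hom m n (f : 'I_m.+1 -> 'I_n.+1) : dmono f -> lam_hom m n (lam_of f).
Proof.
move=> f_mono; rewrite lam_of_periodize.
apply: periodize_lam_hom => [a b ab|]; first by rewrite lez_nat f_mono.
by rewrite -PoszD lez_nat (leq_trans (ltnW (ltn_ord _))) ?leq_addl.
Qed.

Lemma lam_of_ord m n (f : 'I_m.+1 -> 'I_n.+1) (r : 'I_m.+1) :
  lam_of f r%:Z = (f r)%:Z.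
Proof. by rewrite lam_of_periodize periodize_ord. Qed.

Lemma periodize_lam_of m n E (h : 'I_n.+1 -> int) (f : 'I_m.+1 -> 'I_n.+1) :
  periodize E h \o lam_of f =1 periodize E (h \o f).
Proof.
by move=> i; have [r [q ->]] := int_ord_decomp m i; rewrite /= lam_of_periodize !periodizeE.
Qed.

Lemma lam_of_comp m n p (f : 'I_n.+1 -> 'I_p.+1) (g : 'I_m.+1 -> 'I_n.+1) :
  lam_of f \o lam_of g =1 lam_of (f \o g).
Proof. by rewrite [lam_of f]lam_of_periodize; apply: periodize_lam_of. Qed.

Lemma lam_eq_of_eqfun n (F G : int -> int) : F =1 G -> lam_eq n F G.
Proof. by move=> FG; exists 0 => i; rewrite FG mul0r addr0. Qed.

Lemma lam_eq_sym n (F G : int -> int) : lam_eq n F G -> lam_eq n G F.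
Proof. by case=> c FG; exists (- c) => i; rewrite FG mulNr addrK. Qed.

Lemma lam_eq_trans n (F G H : int -> int) : lam_eq n F G -> lam_eq n G H -> lam_eq n F H.
Proof. by case=> c FG [d GH]; exists (c + d) => i; rewrite GH FG mulrDl addrA. Qed.

Lemma lam_eq_ord n e (z z' : int -> int) (c : int) :
  lam_hom n e z -> lam_hom n e z' ->
  (forall j : 'I_n.+1, z' j%:Z = z j%:Z + c * (e.+1)%:Z) -> lam_eq e z z'.
Proof.
move=> z_hom z'_hom zz'; exists c => i; have [r [q ->]] := int_ord_decomp n i.
by rewrite !(lam_hom_shift z_hom, lam_hom_shift z'_hom) zz' addrAC.
Qed.

Lemma dmono_lt m n (f : 'I_m.+1 -> 'I_n.+1) i1 i2 : dmono f -> (f i1 < f i2)%N -> (i1 < i2)%N.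
Proof. by move=> f_mono; apply: contraTT; rewrite -!leqNgt => /f_mono. Qed.

Lemma dmono_succ_le m n (f : 'I_m.+1 -> 'I_n.+1) (phi : 'I_m.+1 -> int) (G : 'I_n.+1 -> int) :
  dmono f -> {homo phi : a b / (a <= b)%N >-> a <= b} -> (forall i, G (f i) = phi i) ->
  forall i1 i2, (f i1).+1 = f i2 -> G (f i1) <= G (f i2).
Proof.
move=> f_mono phi_mono G_f i1 i2 f_succ.
by rewrite !G_f phi_mono // ltnW // (dmono_lt f_mono) // -f_succ.
Qed.

Lemma compatible_sym m m' n (f : 'I_m.+1 -> 'I_n.+1) (f' : 'I_m'.+1 -> 'I_n.+1) :
  compatible f f' -> compatible f' f.
Proof. by case=> bc1 bc2; split=> [i|i i_pos]; rewrite orbC ?bc1 ?bc2. Qed.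

(* (BC1): if the f-fibre through i1 and i2 is not a singleton, the f'-fibre over the
   same point is, and phi equals psi of that single point on the whole f-fibre. *)
Lemma compatible_fibre m m' n (f : 'I_m.+1 -> 'I_n.+1) (f' : 'I_m'.+1 -> 'I_n.+1)
    (T : Type) (phi : 'I_m.+1 -> T) (psi : 'I_m'.+1 -> T) :
  compatible f f' -> (forall i i', f i = f' i' -> phi i = psi i') ->
  forall i1 i2, f i1 = f i2 -> phi i1 = phi i2.
Proof.
move=> [bc1 _] phi_psi i1 i2 fi12; case/orP: (bc1 (f i1)) => /card1P [i0 fibre_i0].
  by move: (fibre_i0 i1) (fibre_i0 i2); rewrite !inE /= fi12 eqxx => /esym/eqP-> /esym/eqP->.
have := fibre_i0 i0; rewrite !inE eqxx => /eqP/esym fi0.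
by rewrite (phi_psi _ _ fi0) (phi_psi _ _ (etrans (esym fi12) fi0)).
Qed.

Section Gluing.

Variables (m m' n : nat) (f : 'I_m.+1 -> 'I_n.+1) (f' : 'I_m'.+1 -> 'I_n.+1).
Hypotheses (f_mono : dmono f) (f'_mono : dmono f').
Hypotheses (f_active : left_active f) (f'_active : left_active f').
Hypothesis ff'_compat : compatible f f'.

Lemma compatible_cover (j : 'I_n.+1) : (exists i, f i = j) \/ (exists i', f' i' = j).
Proof.
have [j0|j_pos] := posnP j.
  by left; exists ord0; apply: val_inj; rewrite /= f_active j0.
have [_ /(_ j j_pos)] := ff'_compat.
by case/orP=> /andP [_ /existsP [i /eqP fi]]; [left | right]; exists i; apply: val_inj.
Qed.

Section Glue.

Variables (phi : 'I_m.+1 -> int) (psi : 'I_m'.+1 -> int).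
Hypothesis phi_psi : forall i i', f i = f' i' -> phi i = psi i'.
Hypothesis phi_mono : {homo phi : a b / (a <= b)%N >-> a <= b}.
Hypothesis psi_mono : {homo psi : a b / (a <= b)%N >-> a <= b}.

(* The default value 0 is never used, by [compatible_cover]. *)
Definition glue (j : 'I_n.+1) : int :=
  if [pick i | f i == j] is Some i then phi i
  else if [pick i' | f' i' == j] is Some i' then psi i' else 0.

Lemma glue_f i : glue (f i) = phi i.
Proof.
rewrite /glue; case: pickP => [i0 /eqP|no_preimage].
  exact: (compatible_fibre ff'_compat phi_psi).
by have := no_preimage i; rewrite eqxx.
Qed.

Lemma glue_f' i' : glue (f' i') = psi i'.
Proof.
rewrite /glue; case: pickP => [i0 /eqP|_]; first exact: phi_psi.
case: pickP => [i1 /eqP|no_preimage].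
  apply: (compatible_fibre (compatible_sym ff'_compat) (phi := psi) (psi := phi)).
  by move=> ? ? /esym/phi_psi.
by have := no_preimage i'; rewrite eqxx.
Qed.

Lemma glue_step (t : nat) (t_lt : (t.+1 < n.+1)%N) :
  glue (inord t) <= glue (Ordinal t_lt).
Proof.
have [_ /(_ (Ordinal t_lt) isT)] := ff'_compat.
case/orP=> /andP [/existsP [i1 /eqP /= fi1] /existsP [i2 /eqP /= fi2]].
  have -> : inord t = f i1 by apply/val_inj; rewrite /= fi1 inordK // ltnW.
  have -> : Ordinal t_lt = f i2 by apply/val_inj.
  by apply: (dmono_succ_le f_mono phi_mono glue_f); rewrite fi1 fi2.
have -> : inord t = f' i1 by apply/val_inj; rewrite /= fi1 inordK // ltnW.
have -> : Ordinal t_lt = f' i2 by apply/val_inj.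
by apply: (dmono_succ_le f'_mono psi_mono glue_f'); rewrite fi1 fi2.
Qed.

Lemma glue_mono : {homo glue : a b / (a <= b)%N >-> a <= b}.
Proof.
have glue_nat_mono : {in [pred t | (t < n.+1)%N] &,
    {homo (fun t => glue (inord t)) : s t / (s <= t)%N >-> s <= t}}.
  apply: homo_leq_in => [//|? ? ?|s u _ u_lt t /andP [_ t_lt]|t _ t_lt].
  - exact: le_trans.
  - exact: ltn_trans t_lt u_lt.
  have -> : inord t.+1 = Ordinal t_lt :> 'I_n.+1 by apply/val_inj/inordK.
  exact: glue_step.
move=> a b ab; rewrite -(inord_val a) -(inord_val b).
by apply: glue_nat_mono; rewrite ?inE.
Qed.

Lemma glue_wrap (E : int) :
  phi ord_max <= phi ord0 + E -> psi ord_max <= psi ord0 + E ->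
  glue ord_max <= glue ord0 + E.
Proof.
move=> phi_wrap psi_wrap.
have f0 : f ord0 = ord0 by apply: val_inj.
have phi_psi0 : phi ord0 = psi ord0.
  by apply: phi_psi; apply: val_inj; rewrite /= f_active f'_active.
rewrite -f0 glue_f; case: (compatible_cover ord_max) => [[i <-]|[i <-]].
  by rewrite glue_f (le_trans _ phi_wrap) // phi_mono // -ltnS.
by rewrite glue_f' phi_psi0 (le_trans _ psi_wrap) // psi_mono // -ltnS.
Qed.

End Glue.

End Gluing.

Section Pushout.

Variables (m m' n k : nat) (f : 'I_m.+1 -> 'I_n.+1) (f' : 'I_m'.+1 -> 'I_n.+1).
Variables (g : 'I_k.+1 -> 'I_m.+1) (g' : 'I_k.+1 -> 'I_m'.+1).
Hypotheses (f_mono : dmono f) (f'_mono : dmono f').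
Hypotheses (f_active : left_active f) (f'_active : left_active f').
Hypothesis ff'_compat : compatible f f'.
Hypothesis gg'_pullback : delta_pullback g g' f f'.

Lemma pullback_lift i i' : f i = f' i' -> exists p, g p = i /\ g' p = i'.
Proof.
move=> fi; case: gg'_pullback => _ _ _ /(_ 0%N (fun=> i) (fun=> i')).
case=> [? ? _ //|? ? _ //|_ //|u [_ gu g'u _]].
by exists (u ord0).
Qed.

Lemma lam_square_commutes : lam_of f \o lam_of g =1 lam_of f' \o lam_of g'.
Proof. by case: gg'_pullback => _ _ fg _ i; rewrite !lam_of_comp /lam_of /= fg. Qed.

Lemma pushout_factor_strict e x y : lam_hom m e x -> lam_hom m' e y ->
  x \o lam_of g =1 y \o lam_of g' ->
  exists z, [/\ lam_hom n e z, z \o lam_of f =1 x & z \o lam_of f' =1 y].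
Proof.
move=> x_hom y_hom xy; pose phi r := x r%:Z; pose psi r := y r%:Z.
have phi_psi i i' : f i = f' i' -> phi i = psi i'.
  by case/pullback_lift=> p [<- <-]; have := xy p%:Z; rewrite /= !lam_of_ord.
have [phi_mono psi_mono] := (lam_hom_mono_ord x_hom, lam_hom_mono_ord y_hom).
exists (periodize e.+1 (glue f f' phi psi)); split.
- apply: periodize_lam_hom; first exact: glue_mono.
  exact: glue_wrap (lam_hom_wrap_ord x_hom) (lam_hom_wrap_ord y_hom).
- move=> i; rewrite periodize_lam_of (lam_hom_periodize x_hom).
  by apply: eq_periodize => r; apply: glue_f.
- move=> i; rewrite periodize_lam_of (lam_hom_periodize y_hom).
  by apply: eq_periodize => r; apply: glue_f'.
Qed.

Lemma pushout_factor e x y : lam_hom m e x -> lam_hom m' e y ->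
  lam_eq e (x \o lam_of g) (y \o lam_of g') ->
  exists z, [/\ lam_hom n e z, lam_eq e (z \o lam_of f) x & lam_eq e (z \o lam_of f') y].
Proof.
move=> x_hom y_hom [c xy].
have [|z [z_hom zx zy1]] :=
  pushout_factor_strict x_hom (lam_hom_addr (- (c * (e.+1)%:Z)) y_hom).
  by move=> i /=; have /= -> := xy i; rewrite addrK.
exists z; split=> //; first exact: lam_eq_of_eqfun.
by exists c => i; rewrite zy1 subrK.
Qed.

Lemma pushout_factor_unique e z z' : lam_hom n e z -> lam_hom n e z' ->
  lam_eq e (z \o lam_of f) (z' \o lam_of f) -> lam_eq e (z \o lam_of f') (z' \o lam_of f') ->
  lam_eq e z z'.
Proof.
move=> z_hom z'_hom [a za] [b zb].
have ba : b = a.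
  move: (za (lam_of g 0)) (zb (lam_of g' 0)) => /=.
  rewrite -[lam_of f' (lam_of g' 0)](lam_square_commutes 0) => -> /addrI.
  by move/mulIf => ->.
apply: (lam_eq_ord (c := a)) z_hom z'_hom _ => j.
case: (compatible_cover f_active ff'_compat j) => [[i <-]|[i <-]].
  by rewrite -!(lam_of_ord f); apply: za.
by rewrite -!(lam_of_ord f') -ba; apply: zb.
Qed.

End Pushout.

Theorem lemma4p2p8 (m m' n k : nat)
  (f : 'I_m.+1 -> 'I_n.+1) (f' : 'I_m'.+1 -> 'I_n.+1)
  (g : 'I_k.+1 -> 'I_m.+1) (g' : 'I_k.+1 -> 'I_m'.+1) :
  dmono f -> dmono f' -> left_active f -> left_active f' ->
  compatible f f' ->
  delta_pullback g g' f f' ->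
  lam_pushout k m m' n (lam_of g) (lam_of g') (lam_of f) (lam_of f').
Proof.
move=> f_mono f'_mono f_active f'_active ff'_compat gg'_pullback.
have [g_mono g'_mono _ _] := gg'_pullback.
split; [by split; apply: lam_of_hom | exact: lam_of_hom | exact: lam_of_hom | |].
  exact/lam_eq_of_eqfun/lam_square_commutes.
move=> e x y x_hom y_hom xy.
have [z [z_hom zx zy]] :=
  pushout_factor f_mono f'_mono f_active f'_active ff'_compat gg'_pullback x_hom y_hom xy.
exists z; split=> // z' z'_hom z'x z'y.
apply: (pushout_factor_unique f_active ff'_compat gg'_pullback) z_hom z'_hom _ _.
  exact: lam_eq_trans zx (lam_eq_sym z'x).
exact: lam_eq_trans zy (lam_eq_sym z'y).
Qed.
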